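(* Let $b(r),h(r)$ be smooth positive functions on an interval of $r>0$ and consider the metric $ds^2=-b^2dt^2+\dfrac{h^2}{b^2}dr^2+r^2(d\theta^2+\sin^2\theta\,d\phi^2)$. Let $\kappa_1,\kappa_2,\kappa_3$ be constants and $$K_{kl}=(\kappa_2r^2-2\kappa_3b^2)u_ku_l+(\kappa_1+2\kappa_2r^2+\kappa_3b^2)g_{kl}-\kappa_2r^2\,\chi_k\chi_l .$$ Let $\mathscr L$ be a differentiable function of one variable (a nonlinear electrodynamics Lagrangian) with derivative $\mathscr L_F$, let $\mathbb E(r),\mathbb B(r)$ be functions, $F=\tfrac12(\mathbb B^2-\mathbb E^2)$, and $$T_{kl}=2(\mathbb E^2+\mathbb B^2)\,\mathscr L_F(F)\,(u_ku_l-\chi_k\chi_l)+2g_{kl}\left[\mathbb B^2\mathscr L_F(F)-\mathscr L(F)\right].$$ If the conformal Killing gravity field equations $R_{kl}-\tfrac12Rg_{kl}=T_{kl}+K_{kl}$ hold, then there is a constant $\kappa_4$ such that $$\frac{1}{h^2}=\kappa_3r^2+\kappa_4 .$$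
   Context: $u_k$ is the unit timelike covector with components $u_0=-b$ and all others zero; $\chi_k$ is the unit radial covector with $\chi_r=h/b$ and all others zero. $R_{kl}$ is the Ricci tensor and $R$ the scalar curvature. $T_{kl}$ is the stress-energy tensor of nonlinear electrodynamics with electric field magnitude $\mathbb E$ and magnetic field magnitude $\mathbb B$ in this static spherically symmetric setting. *)

From Stdlib Require Import Reals.
From Coquelicot Require Import Coquelicot.
Open Scope R_scope.

(** Points of the coordinate chart: x 0 = t, x 1 = r, x 2 = theta, x 3 = phi. *)
Definition point := nat -> R.

Definition upd (x : point) (i : nat) (s : R) : point :=
  fun j => if Nat.eqb j i then s else x j.

Definition pderiv (f : point -> R) (i : nat) (x : point) : R :=
  Derive (fun s => f (upd x i s)) (x i).

Definition sum4 (f : nat -> R) : R := f 0%nat + f 1%nat + f 2%nat + f 3%nat.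

Definition tensor2 := nat -> nat -> point -> R.

Definition christoffel (g ginv : tensor2) (a b c : nat) (x : point) : R :=
  sum4 (fun d => / 2 * ginv a d x *
     (pderiv (g d c) b x + pderiv (g d b) c x - pderiv (g b c) d x)).

Definition ricci (g ginv : tensor2) (b c : nat) (x : point) : R :=
  sum4 (fun a => pderiv (christoffel g ginv a b c) a x)
  - sum4 (fun a => pderiv (christoffel g ginv a a b) c x)
  + sum4 (fun a => sum4 (fun d =>
        christoffel g ginv a a d x * christoffel g ginv d b c x
      - christoffel g ginv a c d x * christoffel g ginv d a b x)).

Definition scalar_curv (g ginv : tensor2) (x : point) : R :=
  sum4 (fun a => sum4 (fun b => ginv a b x * ricci g ginv a b x)).

Definition einstein (g ginv : tensor2) (k l : nat) (x : point) : R :=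
  ricci g ginv k l x - / 2 * scalar_curv g ginv x * g k l x.

Definition sss_metric (b h : R -> R) : tensor2 := fun k l x =>
  match k, l with
  | O, O => - (b (x 1%nat)) ^ 2
  | S O, S O => (h (x 1%nat)) ^ 2 / (b (x 1%nat)) ^ 2
  | S (S O), S (S O) => (x 1%nat) ^ 2
  | S (S (S O)), S (S (S O)) => (x 1%nat) ^ 2 * (sin (x 2%nat)) ^ 2
  | _, _ => 0
  end.

Definition sss_inv (b h : R -> R) : tensor2 := fun k l x =>
  match k, l with
  | O, O => - / (b (x 1%nat)) ^ 2
  | S O, S O => (b (x 1%nat)) ^ 2 / (h (x 1%nat)) ^ 2
  | S (S O), S (S O) => / (x 1%nat) ^ 2
  | S (S (S O)), S (S (S O)) => / ((x 1%nat) ^ 2 * (sin (x 2%nat)) ^ 2)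
  | _, _ => 0
  end.

Definition ucov (b : R -> R) (k : nat) (x : point) : R :=
  if Nat.eqb k 0 then - b (x 1%nat) else 0.
Definition chicov (b h : R -> R) (k : nat) (x : point) : R :=
  if Nat.eqb k 1 then h (x 1%nat) / b (x 1%nat) else 0.

Definition K_ckg (b h : R -> R) (k1 k2 k3 : R) : tensor2 := fun k l x =>
  let r := x 1%nat in
  (k2 * r ^ 2 - 2 * k3 * (b r) ^ 2) * ucov b k x * ucov b l x
  + (k1 + 2 * k2 * r ^ 2 + k3 * (b r) ^ 2) * sss_metric b h k l x
  - k2 * r ^ 2 * chicov b h k x * chicov b h l x.

Definition T_nled (b h : R -> R) (L Ef Bf : R -> R) : tensor2 := fun k l x =>
  let r := x 1%nat in
  let F := / 2 * ((Bf r) ^ 2 - (Ef r) ^ 2) in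
  2 * ((Ef r) ^ 2 + (Bf r) ^ 2) * Derive L F
    * (ucov b k x * ucov b l x - chicov b h k x * chicov b h l x)
  + 2 * sss_metric b h k l x * ((Bf r) ^ 2 * Derive L F - L F).

From Stdlib Require Import Reals Lra Lia Classical_Prop.
From Coquelicot Require Import Coquelicot.
Open Scope R_scope.

(* Contract both sides of the field equations with the radial null vector
   l = u + chi.  On the left the scalar curvature drops out (g(l, l) = 0) and so
   do all derivatives of b: G(l, l) = 2 b^2 h' / (r h^3).  On the right T(l, l) = 0,
   since T is a combination of u u - chi chi and g, while K(l, l) = -2 k3 b^2.
   Hence h' = - k3 r h^3, i.e. (1/h^2)' = 2 k3 r, and integrating over the
   interval gives the claim. *)

Definition chart (r th : R) : point :=
  fun n => match n with 1%nat => r | 2%nat => th | _ => 0 end.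

Lemma sss_metric_chart b h i j x :
  sss_metric b h i j x = sss_metric b h i j (chart (x 1%nat) (x 2%nat)).
Proof. destruct i as [|[|[|[|i]]]]; destruct j as [|[|[|[|j]]]]; reflexivity. Qed.

Lemma sss_inv_chart b h i j x :
  sss_inv b h i j x = sss_inv b h i j (chart (x 1%nat) (x 2%nat)).
Proof. destruct i as [|[|[|[|i]]]]; destruct j as [|[|[|[|j]]]]; reflexivity. Qed.

Definition sss_metric_deriv b h i j (k : nat) r th : R :=
  match k with
  | 1%nat => Derive (fun s => sss_metric b h i j (chart s th)) r
  | 2%nat => Derive (fun s => sss_metric b h i j (chart r s)) th
  | _ => 0
  end.

Lemma pderiv_sss_metric b h i j k x :
  pderiv (sss_metric b h i j) k x = sss_metric_deriv b h i j k (x 1%nat) (x 2%nat).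
Proof.
  unfold pderiv.
  erewrite Derive_ext by (intro s; apply (sss_metric_chart b h i j (upd x k s))).
  destruct k as [|[|[|k]]]; cbv [sss_metric_deriv upd Nat.eqb];
    try reflexivity; apply Derive_const.
Qed.

Definition sss_christoffel b h a c1 c2 r th : R :=
  sum4 (fun d => / 2 * sss_inv b h a d (chart r th) *
    (sss_metric_deriv b h d c2 c1 r th + sss_metric_deriv b h d c1 c2 r th
     - sss_metric_deriv b h c1 c2 d r th)).

Lemma christoffel_sss b h a c1 c2 x :
  christoffel (sss_metric b h) (sss_inv b h) a c1 c2 x
  = sss_christoffel b h a c1 c2 (x 1%nat) (x 2%nat).
Proof.
  unfold christoffel, sss_christoffel, sum4.
  rewrite !pderiv_sss_metric, !(sss_inv_chart b h a _ x).
  reflexivity.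
Qed.

Lemma pderiv_christoffel_sss b h a c1 c2 e x :
  pderiv (christoffel (sss_metric b h) (sss_inv b h) a c1 c2) e x
  = Derive (fun s => sss_christoffel b h a c1 c2 (upd x e s 1%nat) (upd x e s 2%nat)) (x e).
Proof. apply Derive_ext; intro s; apply christoffel_sss. Qed.

Definition regular_at (b h : R -> R) (r : R) : Prop :=
  0 < r /\ 0 < b r /\ 0 < h r /\ ex_derive b r /\ ex_derive h r
  /\ ex_derive (Derive b) r /\ ex_derive (Derive h) r.

(* [auto_derive] leaves eta-expanded [Derive (fun x => f x)] in its results. *)
Ltac fold_eta :=
  repeat match goal with
  | |- context [Derive (fun x => ?f x) ?r] =>
      change (Derive (fun x => f x) r) with (Derive f r)
  end.

Lemma Derive_sqr_div b h r : 0 < b r -> ex_derive b r -> ex_derive h r ->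
  Derive (fun s => h s ^ 2 / b s ^ 2) r
  = 2 * h r * (Derive h r * b r - h r * Derive b r) / b r ^ 3.
Proof.
  intros Hb Db Dh. apply is_derive_unique. auto_derive.
  - repeat split; auto. intro; nra.
  - fold_eta. field. lra.
Qed.

Lemma Derive_opp_sqr b r : ex_derive b r ->
  Derive (fun s => - b s ^ 2) r = - (2 * b r * Derive b r).
Proof. intro Db. apply is_derive_unique. auto_derive; auto. fold_eta. ring. Qed.

Lemma Derive_sqr r : Derive (fun s => s ^ 2) r = 2 * r.
Proof. apply is_derive_unique. auto_derive; auto. ring. Qed.

Lemma Derive_sqr_scal c r : Derive (fun s => s ^ 2 * c) r = 2 * r * c.
Proof. apply is_derive_unique. auto_derive; auto. ring. Qed.

Lemma Derive_scal_sin_sqr c th :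
  Derive (fun s => c * sin s ^ 2) th = c * (2 * sin th * cos th).
Proof. apply is_derive_unique. auto_derive; auto. ring. Qed.

Ltac compute_sss_christoffel :=
  cbv beta iota zeta delta [sss_christoffel sum4 sss_metric_deriv sss_metric sss_inv chart];
  rewrite ?Derive_const, ?Derive_sqr, ?Derive_sqr_scal, ?Derive_scal_sin_sqr;
  rewrite ?Derive_sqr_div, ?Derive_opp_sqr by assumption.

(* [christoffel_a_bc] is Gamma^a_bc with t, r, th, ph = 0, 1, 2, 3. *)
Section Christoffel.

Variables (b h : R -> R) (r th : R).
Hypothesis Hreg : regular_at b h r.

Lemma christoffel_r_tt : sss_christoffel b h 1 0 0 r th = b r ^ 3 * Derive b r / h r ^ 2.
Proof.
  destruct Hreg as (Hr & Hb & Hh & Db & Dh & _).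
  compute_sss_christoffel. field. lra.
Qed.

Lemma christoffel_r_rr :
  sss_christoffel b h 1 1 1 r th = Derive h r / h r - Derive b r / b r.
Proof.
  destruct Hreg as (Hr & Hb & Hh & Db & Dh & _).
  compute_sss_christoffel. field. lra.
Qed.

Lemma christoffel_t_tr : sss_christoffel b h 0 0 1 r th = Derive b r / b r.
Proof.
  destruct Hreg as (Hr & Hb & Hh & Db & Dh & _).
  compute_sss_christoffel. field. lra.
Qed.

Lemma christoffel_th_thr : sss_christoffel b h 2 2 1 r th = / r.
Proof.
  destruct Hreg as (Hr & Hb & Hh & Db & Dh & _).
  compute_sss_christoffel. field. lra.
Qed.

Lemma christoffel_ph_phr : sin th <> 0 -> sss_christoffel b h 3 3 1 r th = / r.
Proof.
  intro Hsin. destruct Hreg as (Hr & Hb & Hh & Db & Dh & _).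
  compute_sss_christoffel. field. lra.
Qed.

End Christoffel.

Lemma christoffel_th_tt b h r th : sss_christoffel b h 2 0 0 r th = 0.
Proof. compute_sss_christoffel. ring. Qed.

Lemma christoffel_th_rr b h r th : sss_christoffel b h 2 1 1 r th = 0.
Proof. compute_sss_christoffel. ring. Qed.

Lemma Derive_christoffel_loc b h r th a c1 c2 (F : R -> R) :
  locally r (regular_at b h) ->
  (forall s, regular_at b h s -> sss_christoffel b h a c1 c2 s th = F s) ->
  Derive (fun s => sss_christoffel b h a c1 c2 s th) r = Derive F r.
Proof.
  intros Hloc HF. apply Derive_ext_loc.
  eapply filter_imp; [|exact Hloc]. exact HF.
Qed.

Ltac solve_Derive_regular Hloc :=
  destruct (locally_singleton _ _ Hloc) as (Hr & Hb & Hh & Db & Dh & DDb & DDh);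
  apply is_derive_unique; auto_derive;
  [ repeat split; auto; intro; nra | fold_eta; field; lra ].

Section Christoffel_derivatives.

Variables (b h : R -> R) (r th : R).
Hypothesis Hloc : locally r (regular_at b h).

Lemma Derive_christoffel_r_tt :
  Derive (fun s => sss_christoffel b h 1 0 0 s th) r
  = (3 * b r ^ 2 * Derive b r ^ 2 + b r ^ 3 * Derive (Derive b) r) / h r ^ 2
    - 2 * b r ^ 3 * Derive b r * Derive h r / h r ^ 3.
Proof.
  rewrite (Derive_christoffel_loc _ _ _ _ _ _ _ _ Hloc (fun s => christoffel_r_tt b h s th)).
  solve_Derive_regular Hloc.
Qed.

Lemma Derive_christoffel_r_rr :
  Derive (fun s => sss_christoffel b h 1 1 1 s th) r
  = Derive (Derive h) r / h r - Derive h r ^ 2 / h r ^ 2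
    - Derive (Derive b) r / b r + Derive b r ^ 2 / b r ^ 2.
Proof.
  rewrite (Derive_christoffel_loc _ _ _ _ _ _ _ _ Hloc (fun s => christoffel_r_rr b h s th)).
  solve_Derive_regular Hloc.
Qed.

Lemma Derive_christoffel_t_tr :
  Derive (fun s => sss_christoffel b h 0 0 1 s th) r
  = Derive (Derive b) r / b r - Derive b r ^ 2 / b r ^ 2.
Proof.
  rewrite (Derive_christoffel_loc _ _ _ _ _ _ _ _ Hloc (fun s => christoffel_t_tr b h s th)).
  solve_Derive_regular Hloc.
Qed.

Lemma Derive_christoffel_th_thr :
  Derive (fun s => sss_christoffel b h 2 2 1 s th) r = - / r ^ 2.
Proof.
  rewrite (Derive_christoffel_loc _ _ _ _ _ _ _ _ Hloc (fun s => christoffel_th_thr b h s th)).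
  solve_Derive_regular Hloc.
Qed.

Lemma Derive_christoffel_ph_phr : sin th <> 0 ->
  Derive (fun s => sss_christoffel b h 3 3 1 s th) r = - / r ^ 2.
Proof.
  intro Hsin.
  rewrite (Derive_christoffel_loc _ _ _ _ _ _ _ _ Hloc
             (fun s Hs => christoffel_ph_phr b h s th Hs Hsin)).
  solve_Derive_regular Hloc.
Qed.

End Christoffel_derivatives.

Lemma Derive_christoffel_th_tt b h r th :
  Derive (fun s => sss_christoffel b h 2 0 0 r s) th = 0.
Proof.
  rewrite <- (Derive_const 0 th). apply Derive_ext. intro. apply christoffel_th_tt.
Qed.

Lemma Derive_christoffel_th_rr b h r th :
  Derive (fun s => sss_christoffel b h 2 1 1 r s) th = 0.
Proof.
  rewrite <- (Derive_const 0 th). apply Derive_ext. intro. apply christoffel_th_rr.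
Qed.

Section Ricci.

Variables (b h : R -> R) (r : R).
Hypothesis Hloc : locally r (regular_at b h).

Let b1 := Derive b r.
Let b2 := Derive (Derive b) r.
Let h1 := Derive h r.

Lemma ricci_sss_tt :
  ricci (sss_metric b h) (sss_inv b h) 0 0 (chart r (PI / 2))
  = b r ^ 3 / h r ^ 2 * (b2 + b1 ^ 2 / b r - b1 * h1 / h r + 2 * b1 / r).
Proof.
  unfold ricci, sum4. rewrite !pderiv_christoffel_sss, !christoffel_sss.
  cbv beta iota zeta delta [upd Nat.eqb chart].
  rewrite ?Derive_const, Derive_christoffel_r_tt, Derive_christoffel_th_tt by exact Hloc.
  destruct (locally_singleton _ _ Hloc) as (Hr & Hb & Hh & Db & Dh & _).
  compute_sss_christoffel. rewrite sin_PI2, cos_PI2.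
  unfold b1, b2, h1. field. lra.
Qed.

Lemma ricci_sss_rr :
  ricci (sss_metric b h) (sss_inv b h) 1 1 (chart r (PI / 2))
  = - b2 / b r - b1 ^ 2 / b r ^ 2 + b1 * h1 / (b r * h r) + 2 * (h1 / h r - b1 / b r) / r.
Proof.
  assert (Hsin : sin (PI / 2) <> 0) by (rewrite sin_PI2; lra).
  unfold ricci, sum4. rewrite !pderiv_christoffel_sss, !christoffel_sss.
  cbv beta iota zeta delta [upd Nat.eqb chart].
  rewrite ?Derive_const, Derive_christoffel_r_rr, Derive_christoffel_t_tr,
    Derive_christoffel_th_thr, Derive_christoffel_ph_phr, Derive_christoffel_th_rr
    by (exact Hloc || exact Hsin).
  destruct (locally_singleton _ _ Hloc) as (Hr & Hb & Hh & Db & Dh & _).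
  compute_sss_christoffel. rewrite sin_PI2, cos_PI2.
  unfold b1, b2, h1. field. lra.
Qed.

End Ricci.

(* [S(l, l)] for the radial null vector [l^k = u^k + chi^k = (1/b, b/h, 0, 0)],
   when [S_01 = S_10 = 0]. *)
Definition radial_null_part (b h : R -> R) (S : tensor2) (x : point) : R :=
  S 0%nat 0%nat x / b (x 1%nat) ^ 2 + b (x 1%nat) ^ 2 * S 1%nat 1%nat x / h (x 1%nat) ^ 2.

Lemma radial_null_partD b h (S S' : tensor2) x :
  radial_null_part b h (fun k l y => S k l y + S' k l y) x
  = radial_null_part b h S x + radial_null_part b h S' x.
Proof. unfold radial_null_part, Rdiv. ring. Qed.

Lemma radial_null_part_einstein b h r : locally r (regular_at b h) ->
  radial_null_part b h (einstein (sss_metric b h) (sss_inv b h)) (chart r (PI / 2))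
  = 2 * b r ^ 2 * Derive h r / (r * h r ^ 3).
Proof.
  intro Hloc. unfold radial_null_part, einstein.
  rewrite ricci_sss_tt, ricci_sss_rr by exact Hloc.
  destruct (locally_singleton _ _ Hloc) as (Hr & Hb & Hh & _).
  cbv [sss_metric chart]. field. lra.
Qed.

Lemma radial_null_part_T_nled b h L Ef Bf x : 0 < b (x 1%nat) -> 0 < h (x 1%nat) ->
  radial_null_part b h (T_nled b h L Ef Bf) x = 0.
Proof.
  intros Hb Hh. unfold radial_null_part, T_nled, sss_metric, ucov, chicov; simpl.
  field. lra.
Qed.

Lemma radial_null_part_K_ckg b h k1 k2 k3 x : 0 < b (x 1%nat) -> 0 < h (x 1%nat) ->
  radial_null_part b h (K_ckg b h k1 k2 k3) x = - 2 * k3 * b (x 1%nat) ^ 2.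
Proof.
  intros Hb Hh. unfold radial_null_part, K_ckg, sss_metric, ucov, chicov; simpl.
  field. lra.
Qed.

Lemma h_ode_of_field_equations b h L Ef Bf k1 k2 k3 r :
  locally r (regular_at b h) ->
  (forall k l : nat, (k < 4)%nat -> (l < 4)%nat ->
     einstein (sss_metric b h) (sss_inv b h) k l (chart r (PI / 2))
     = T_nled b h L Ef Bf k l (chart r (PI / 2))
       + K_ckg b h k1 k2 k3 k l (chart r (PI / 2))) ->
  Derive h r = - k3 * r * h r ^ 3.
Proof.
  intros Hloc Hfield.
  destruct (locally_singleton _ _ Hloc) as (Hr & Hb & Hh & _).
  assert (Hnull :
    radial_null_part b h (einstein (sss_metric b h) (sss_inv b h)) (chart r (PI / 2))
    = radial_null_part b h
        (fun k l x => T_nled b h L Ef Bf k l x + K_ckg b h k1 k2 k3 k l x)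
        (chart r (PI / 2))).
  { unfold radial_null_part. rewrite !Hfield by lia. reflexivity. }
  rewrite radial_null_partD, radial_null_part_einstein, radial_null_part_T_nled,
    radial_null_part_K_ckg in Hnull by assumption.
  simpl chart in Hnull.
  replace (Derive h r)
    with (2 * b r ^ 2 * Derive h r / (r * h r ^ 3) * (r * h r ^ 3 / (2 * b r ^ 2)))
    by (field; lra).
  rewrite Hnull. field. lra.
Qed.

Lemma is_derive_inv_sqr_sub h k3 s : 0 < h s -> ex_derive h s ->
  Derive h s = - k3 * s * h s ^ 3 ->
  is_derive (fun r => 1 / h r ^ 2 - k3 * r ^ 2) s 0.
Proof.
  intros Hh Dh Hode. auto_derive.
  - repeat split; auto. intro; nra.
  - fold_eta. rewrite Hode. field. lra.
Qed.

Lemma constant_of_is_derive_0 (I : R -> Prop) (f : R -> R) :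
  (forall r s q, I r -> I q -> r <= s <= q -> I s) ->
  (forall s, I s -> is_derive f s 0) ->
  exists c, forall r, I r -> f r = c.
Proof.
  intros Hconv Hf.
  destruct (classic (exists r0, I r0)) as [[r0 I0] | Hempty].
  2: { exists 0. intros r Ir. exfalso. apply Hempty. now exists r. }
  exists (f r0). intros r Ir.
  assert (Hbetween : forall x, Rmin r0 r <= x <= Rmax r0 r -> I x).
  { intros x Hx. apply (Hconv (Rmin r0 r) x (Rmax r0 r)); auto;
      unfold Rmin, Rmax; destruct (Rle_dec r0 r); auto. }
  destruct (MVT_gen f r0 r (fun _ => 0)) as [c [_ Hc]].
  - intros x Hx. apply Hf, Hbetween. lra.
  - intros x Hx. apply continuity_pt_filterlim, (@ex_derive_continuous R_AbsRing R_NormedModule).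
    exists 0. now apply Hf, Hbetween.
  - lra.
Qed.

Theorem proposition11 (I : R -> Prop) (b h : R -> R) (k1 k2 k3 : R)
  (L Ef Bf : R -> R) :
  (forall r, I r -> 0 < r) ->
  (forall r, I r -> exists eps : posreal, forall s, Rabs (s - r) < eps -> I s) ->
  (forall r s q, I r -> I q -> r <= s <= q -> I s) ->
  (forall r, I r -> 0 < b r /\ 0 < h r) ->
  (forall (n : nat) r, I r -> ex_derive_n b n r /\ ex_derive_n h n r) ->
  (forall F, ex_derive L F) ->
  (forall x : point, I (x 1%nat) -> 0 < x 2%nat < PI ->
     forall k l : nat, (k < 4)%nat -> (l < 4)%nat ->
     einstein (sss_metric b h) (sss_inv b h) k l x
       = T_nled b h L Ef Bf k l x + K_ckg b h k1 k2 k3 k l x) ->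
  exists k4 : R, forall r, I r -> 1 / (h r) ^ 2 = k3 * r ^ 2 + k4.
Proof.
  intros Hr Hopen Hconv Hbh Hsmooth _ Hfield.
  assert (Hreg : forall s, I s -> regular_at b h s).
  { intros s Is. destruct (Hbh s Is), (Hsmooth 1%nat s Is), (Hsmooth 2%nat s Is).
    repeat split; auto. }
  assert (Hloc : forall r, I r -> locally r (regular_at b h)).
  { intros r Ir. destruct (Hopen r Ir) as [eps Heps].
    exists eps. intros s Hs. now apply Hreg, Heps. }
  assert (Hode : forall r, I r -> Derive h r = - k3 * r * h r ^ 3).
  { intros r Ir. apply (h_ode_of_field_equations b h L Ef Bf k1 k2 k3 r (Hloc r Ir)).
    apply Hfield; [exact Ir | simpl; pose proof PI_RGT_0; lra]. }
  destruct (constant_of_is_derive_0 I (fun r => 1 / h r ^ 2 - k3 * r ^ 2) Hconv)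
    as [k4 Hk4].
  - intros s Is. destruct (Hreg s Is) as (_ & _ & Hh & _ & Dh & _).
    exact (is_derive_inv_sqr_sub h k3 s Hh Dh (Hode s Is)).
  - exists k4. intros r Ir. rewrite <- (Hk4 r Ir). ring.
Qed.
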